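(* Let $I=(G,E^\ell,E^f,s,t,c,d)$ be an instance of the Bilevel Shortest Path problem in the weak path completion variant, where $G$ is directed or undirected. Then there exists a pair $(X,Y)$ with $X\subseteq E^\ell$ and $Y\subseteq E^f$ such that $X$ is an optimal choice for the leader's problem, $Y$ is an optimal choice for the follower's problem given $X$, and $X\cup Y$ is an $s$-$t$-path, i.e. $X\cup Y\in\mathcal P_{st}$.
   Context: An instance is $I=(G,E^\ell,E^f,s,t,c,d)$: $G=(V,E)$ a simple directed or undirected graph, $E=E^\ell\cup E^f$ a partition (leader's and follower's edges), $s,t\in V$, $c,d:E\to\mathbb{R}_{\ge0}$; $f(Z)=\sum_{e\in Z}f(e)$. Paths are simple and identified with edge sets; $\mathcal P_{st}$, the set of $s$-$t$-paths, is assumed nonempty. Weak variant: $\mathrm{OPT}_{\mathrm{weak}}(I)=\min c(X\cup Y)$ over $X\subseteq E^\ell$ and $Y\in\arg\min\{d(Y'):Y'\subseteq E^f,\ \exists P\subseteq X\cup Y' \text{ with } P\in\mathcal P_{st}\}$; leader choices making the follower's problem infeasible are infeasible; optimistic setting: among follower-optimal responses the follower picks one minimizing $c(Y)$. An optimal choice for the leader is a feasible $X$ attaining $\mathrm{OPT}_{\mathrm{weak}}(I)$. *)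

From HB Require Import structures.
From mathcomp Require Import all_boot all_order all_algebra.
Set Implicit Arguments. Unset Strict Implicit. Unset Printing Implicit Defensive.
Import Order.TTheory GRing.Theory Num.Theory.
Local Open Scope ring_scope.

(* If [directed] then e is the arc
   (src e, dst e); otherwise it is the undirected edge {src e, dst e}. *)
Section Bilevel.
Variables (V E : finType) (directed : bool) (src dst : E -> V).

Definition joins (e : E) (u v : V) : bool :=
  if directed then (src e == u) && (dst e == v)
  else ((src e == u) && (dst e == v)) || ((src e == v) && (dst e == u)).

Definition simple_graph : Prop :=
  (forall e, src e != dst e) /\
  (forall e e' u v, joins e u v -> joins e' u v -> e = e').

(* P is (the edge set of) a simple s-t-path: there is a vertex sequence
   s = v_0, v_1, ..., v_k = t of pairwise distinct vertices and edges
   e_1..e_k with e_i traversable from v_(i-1) to v_i, and P = {e_1..e_k}. *)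
Definition is_st_path (s t : V) (P : {set E}) : Prop :=
  exists (p : seq V) (es : seq E),
    [/\ last s p = t, uniq (s :: p), size es = size p,
        all (fun x => joins x.1 x.2.1 x.2.2) (zip es (zip (s :: p) p))
      & P = [set e in es]].

Variables (R : realFieldType) (El : {set E}) (s t : V) (c d : E -> R).

Definition cost (f : E -> R) (Z : {set E}) : R := \sum_(e in Z) f e.

Definition follower_feasible (X Y : {set E}) : Prop :=
  Y \subset ~: El /\ exists P, is_st_path s t P /\ P \subset X :|: Y.

Definition follower_argmin (X Y : {set E}) : Prop :=
  follower_feasible X Y /\
  forall Y' : {set E}, follower_feasible X Y' -> cost d Y <= cost d Y'.

(* optimal (optimistic) follower choice: among the d-minimal responses,
   one minimizing c(Y) *)
Definition follower_optimal (X Y : {set E}) : Prop :=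
  follower_argmin X Y /\
  forall Y' : {set E}, follower_argmin X Y' -> cost c Y <= cost c Y'.

Definition leader_optimal (X : {set E}) : Prop :=
  X \subset El /\
  exists Y, follower_argmin X Y /\
    forall X' Y' : {set E}, X' \subset El -> follower_argmin X' Y' ->
      cost c (X :|: Y) <= cost c (X' :|: Y').

End Bilevel.

(* Among all pairs (X, Y) with X a leader choice and Y a d-minimal follower
   response, pick one minimising c(X ∪ Y); this exists because there are
   finitely many pairs.  X ∪ Y contains an s-t-path P, and we cut the pair
   down to (P ∩ E^l, P \ E^l).  Shrinking the leader's set only shrinks the
   follower's feasible responses, and P \ E^l ⊆ Y, so P \ E^l is still
   d-minimal; since c ≥ 0, c(P) ≤ c(X ∪ Y), so the new pair is again
   c-minimal.  Being c-minimal among all pairs, its follower part is in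
   particular c-minimal among the d-minimal responses to P ∩ E^l. *)

From mathcomp Require Import all_boot all_order all_algebra.
From mathcomp Require Import boolp.
Set Implicit Arguments. Unset Strict Implicit. Unset Printing Implicit Defensive.
Import Order.TTheory GRing.Theory Num.Theory.
Local Open Scope ring_scope.

Lemma exists_minimizer (T : finType) disp (O : orderType disp)
    (P : T -> Prop) (F : T -> O) :
  (exists x, P x) -> exists2 x, P x & forall y, P y -> (F x <= F y)%O.
Proof.
move=> [x0 /asboolP Px0].
case: (arg_minP F (P := fun x => `[< P x >]) Px0) => x /asboolP Px minx.
by exists x => // y /asboolP; apply: minx.
Qed.

Section Cost.
Variables (R : realFieldType) (E : finType) (f : E -> R).

Lemma cost_subset (A B : {set E}) :
  (forall e, 0 <= f e) -> A \subset B -> cost f A <= cost f B.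
Proof.
move=> f_ge0 sAB; rewrite /cost [leRHS](big_setID A) /= (setIidPr sAB) lerDl.
by apply: sumr_ge0 => e _; apply: f_ge0.
Qed.

Lemma cost_setU_disjoint (A B : {set E}) :
  [disjoint A & B] -> cost f (A :|: B) = cost f A + cost f B.
Proof.
move=> dAB; rewrite /cost -bigU //.
by apply: eq_bigl => e; rewrite !inE.
Qed.

End Cost.

Section BilevelOptimum.
Variables (V E : finType) (directed : bool) (src dst : E -> V).
Variables (R : realFieldType) (El : {set E}) (s t : V) (c d : E -> R).

Local Notation st_path := (is_st_path directed src dst s t).
Local Notation feasible := (follower_feasible directed src dst El s t).
Local Notation argmin := (follower_argmin directed src dst El s t d).

Definition optimal_pair (X Y : {set E}) : Prop :=
  [/\ X \subset El, argmin X Y &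
      forall X' Y' : {set E}, X' \subset El -> argmin X' Y' ->
        cost c (X :|: Y) <= cost c (X' :|: Y')].

Lemma follower_feasibleS (X X' Y : {set E}) :
  X \subset X' -> feasible X Y -> feasible X' Y.
Proof.
move=> sXX' [sYEf [P [stP sPXY]]]; split => //.
by exists P; split => //; apply: subset_trans sPXY (setSU _ sXX').
Qed.

Lemma exists_follower_argmin (X Y : {set E}) :
  feasible X Y -> exists Y', argmin X Y'.
Proof.
move=> feasXY.
have [Y' feasY' minY'] := exists_minimizer (cost d) (ex_intro _ _ feasXY).
by exists Y'.
Qed.

Lemma exists_optimal_pair :
  (exists P, st_path P) -> exists X Y, optimal_pair X Y.
Proof.
move=> [P stP].
have feas_El : feasible El (~: El).
  by split => //; exists P; rewrite setUCr subsetT.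
have [Y argminY] := exists_follower_argmin feas_El.
have [[X' Y'] /= [sX'El argminY'] minXY'] :=
  exists_minimizer (fun XY : {set E} * {set E} => cost c (XY.1 :|: XY.2))
    (P := fun XY : {set E} * {set E} => XY.1 \subset El /\ argmin XY.1 XY.2)
    (ex_intro _ (El, Y) (conj (subxx El) argminY)).
by exists X', Y'; split => // X'' Y'' sX''El argminY''; apply: (minXY' (_, _)).
Qed.

Lemma follower_argmin_restrict (X Y P : {set E}) :
  (forall e, 0 <= d e) -> X \subset El -> argmin X Y ->
  st_path P -> P \subset X :|: Y -> argmin (P :&: El) (P :\: El).
Proof.
move=> d_ge0 sXEl [[sYEf _] minY] stP sPXY.
have sPY : P :\: El \subset Y.
  by rewrite subDset (subset_trans sPXY) ?setSU.
have sPX : P :&: El \subset X.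
  apply/subsetP => e /setIP[eP eEl].
  have /setUP[//|/(subsetP sYEf)] := subsetP sPXY e eP.
  by rewrite inE eEl.
split.
  by split; [exact: subsetDr | exists P; rewrite setID].
move=> Y' feasY'; apply: le_trans (cost_subset d_ge0 sPY) (minY _ _).
exact: follower_feasibleS sPX feasY'.
Qed.

Lemma optimal_pair_restrict (X Y P : {set E}) :
  (forall e, 0 <= c e) -> (forall e, 0 <= d e) -> optimal_pair X Y ->
  st_path P -> P \subset X :|: Y -> optimal_pair (P :&: El) (P :\: El).
Proof.
move=> c_ge0 d_ge0 [sXEl argminY minXY] stP sPXY.
split; [exact: subsetIr | exact: follower_argmin_restrict sPXY |].
by move=> X' Y' sX'El argminY'; rewrite setID (le_trans (cost_subset c_ge0 sPXY)) ?minXY.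
Qed.

Lemma leader_optimal_of_pair (X Y : {set E}) :
  optimal_pair X Y -> leader_optimal directed src dst El s t c d X.
Proof. by move=> [sXEl argminY minXY]; split => //; exists Y. Qed.

Lemma follower_optimal_of_pair (X Y : {set E}) :
  optimal_pair X Y -> follower_optimal directed src dst El s t c d X Y.
Proof.
move=> [sXEl argminY minXY]; split => // Y' argminY'.
have disjoint_X (Z : {set E}) : argmin X Z -> [disjoint X & Z].
  by move=> [[sZEf _] _]; rewrite disjoint_sym disjoints_subset (subset_trans sZEf) // setCS.
have := minXY _ _ sXEl argminY'.
by rewrite !cost_setU_disjoint ?disjoint_X // lerD2l.
Qed.

End BilevelOptimum.

Theorem lemma3p2 (R : realFieldType) (V E : finType) (directed : bool)
    (src dst : E -> V) (El : {set E}) (s t : V) (c d : E -> R) :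
  simple_graph directed src dst ->
  (forall e, 0 <= c e) -> (forall e, 0 <= d e) ->
  (exists P, is_st_path directed src dst s t P) ->
  exists X Y : {set E},
    [/\ X \subset El, Y \subset ~: El,
        leader_optimal directed src dst El s t c d X,
        follower_optimal directed src dst El s t c d X Y
      & is_st_path directed src dst s t (X :|: Y)].
Proof.
move=> _ c_ge0 d_ge0 /(exists_optimal_pair El c d)[X [Y optXY]].
have [_ [[_ [P [stP sPXY]]] _] _] := optXY.
have optP := optimal_pair_restrict c_ge0 d_ge0 optXY stP sPXY.
exists (P :&: El), (P :\: El); split.
- exact: subsetIr.
- exact: subsetDr.
- exact: leader_optimal_of_pair optP.
- exact: follower_optimal_of_pair optP.
- by rewrite setID.
Qed.
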